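(* Let $p$ be a prime. If $X\subset\mathbb{R}^{k_1}$ and $Y\subset\mathbb{R}^{k_2}$ are Euclidean sub-$p$-toral, then $X\times Y\subset\mathbb{R}^{k_1+k_2}$ is Euclidean sub-$p$-toral.
   Context: A $p$-torus is a group isomorphic to $(\mathbb{Z}_p)^\alpha$ for some $\alpha\ge1$. A set $X\subset\mathbb{R}^k$ is Euclidean sub-$p$-toral if there exist $n\ge k$, a $p$-torus $G$ and an action of $G$ on $\mathbb{R}^n$ by isometries such that $X$ (viewed in $\mathbb{R}^n$ via the standard inclusion $\mathbb{R}^k\subset\mathbb{R}^n$) is contained in a single $G$-orbit. *)

From HB Require Import structures.
From mathcomp Require Import all_boot all_order all_algebra.
From mathcomp Require Import reals.
Set Implicit Arguments. Unset Strict Implicit. Unset Printing Implicit Defensive.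
Import Order.TTheory GRing.Theory Num.Theory.
Local Open Scope ring_scope.

Definition edist (R : realType) (n : nat) (u v : 'rV[R]_n) : R :=
  Num.sqrt (\sum_(i < n) ((u - v) 0 i) ^+ 2).

Definition isometry (R : realType) (n : nat) (f : 'rV[R]_n -> 'rV[R]_n) : Prop :=
  forall u v, edist (f u) (f v) = edist u v.

(* An action by isometries of the p-torus (Z_p)^alpha (additive group
   'rV['Z_p]_alpha) on R^n. *)
Definition isometric_action (R : realType) (p alpha n : nat)
  (act : 'rV['Z_p]_alpha -> 'rV[R]_n -> 'rV[R]_n) : Prop :=
  [/\ forall x, act 0 x = x,
      forall g h x, act (g + h) x = act g (act h x)
    & forall g, isometry (act g)].

Definition std_incl (R : realType) (k n : nat) (x : 'rV[R]_k) : 'rV[R]_n :=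
  \row_(i < n) (match ltnP i k with
                 | LtnNotGeq hik => x 0 (Ordinal hik)
                 | _ => 0 end).

Definition euclidean_sub_ptoral (R : realType) (p k : nat)
  (X : 'rV[R]_k -> Prop) : Prop :=
  exists (n alpha : nat) (act : 'rV['Z_p]_alpha -> 'rV[R]_n -> 'rV[R]_n),
    [/\ (k <= n)%N, (1 <= alpha)%N, isometric_action act
      & exists x0 : 'rV[R]_n, forall x, X x -> exists g, std_incl n x = act g x0].

Definition setXrow (R : realType) (k1 k2 : nat)
  (X : 'rV[R]_k1 -> Prop) (Y : 'rV[R]_k2 -> Prop) : 'rV[R]_(k1 + k2) -> Prop :=
  fun z => exists x y, [/\ X x, Y y & z = row_mx x y].

From Pilot Require Import Defs.
From mathcomp Require Import all_boot all_order all_algebra all_fingroup.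
From mathcomp Require Import reals.
From mathcomp Require Import zify.
Set Implicit Arguments. Unset Strict Implicit. Unset Printing Implicit Defensive.
Import Order.TTheory GRing.Theory Num.Theory.
Local Open Scope ring_scope.

(* Let the p-tori (Z_p)^a1 and (Z_p)^a2 act isometrically on R^n1 and R^n2,
   with X and Y inside the orbits of x1 and x2.  The p-torus
   (Z_p)^(a1 + a2) acts componentwise on R^n1 x R^n2, and the orbit of
   (x1, x2) contains every (x, y) in X x Y.  It only remains to match the
   standard inclusion of R^(k1 + k2) into R^(n1 + n2) with the product of the
   two standard inclusions, which is done by a permutation of coordinates;
   conjugating the action by this isometry finishes the proof. *)

Section SquaredDistance.
Variable R : realType.

Definition sqdist n (u v : 'rV[R]_n) : R := \sum_(i < n) ((u - v) 0 i) ^+ 2.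

Lemma sqdist_ge0 n (u v : 'rV[R]_n) : 0 <= sqdist u v.
Proof. by apply: sumr_ge0 => i _; rewrite sqr_ge0. Qed.

Lemma isometryP n (f : 'rV[R]_n -> 'rV[R]_n) :
  Defs.isometry f <-> forall u v, sqdist (f u) (f v) = sqdist u v.
Proof.
split=> fP u v; last by rewrite /edist -!/(sqdist _ _) fP.
rewrite -[LHS]sqr_sqrtr ?sqdist_ge0 // -[RHS]sqr_sqrtr ?sqdist_ge0 //.
by congr (_ ^+ 2); exact: fP.
Qed.

Lemma sqdist_row_mx n1 n2 (u1 v1 : 'rV[R]_n1) (u2 v2 : 'rV[R]_n2) :
  sqdist (row_mx u1 u2) (row_mx v1 v2) = sqdist u1 v1 + sqdist u2 v2.
Proof.
rewrite /sqdist big_split_ord /= opp_row_mx add_row_mx.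
by congr (_ + _); apply: eq_bigr => i _; rewrite ?row_mxEl ?row_mxEr.
Qed.

Lemma isometry_col_perm n (s : 'S_n) : Defs.isometry (@col_perm R 1 n s).
Proof.
apply/isometryP => u v; rewrite /sqdist [RHS](reindex_inj (@perm_inj _ s)) /=.
by apply: eq_bigr => i _; rewrite !mxE.
Qed.

End SquaredDistance.

Lemma col_permK (R : Type) m n (s : 'S_n) :
  cancel (@col_perm R m n s) (col_perm s^-1).
Proof. by move=> A; rewrite -col_permM mulVg col_perm1. Qed.

Lemma col_permKV (R : Type) m n (s : 'S_n) :
  cancel (@col_perm R m n s^-1) (col_perm s).
Proof. by move=> A; rewrite -col_permM mulgV col_perm1. Qed.

Section IsometricActions.
Variables (R : realType) (p : nat).

Lemma isometric_action_conj alpha n (act : 'rV['Z_p]_alpha -> 'rV[R]_n -> 'rV[R]_n)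
    (f g : 'rV[R]_n -> 'rV[R]_n) :
  cancel f g -> cancel g f -> Defs.isometry f -> isometric_action act ->
  isometric_action (fun a z => g (act a (f z))).
Proof.
move=> fK gK f_iso [act0 actD act_iso]; split=> [z | a b z | a u v].
- by rewrite act0 fK.
- by rewrite gK actD.
- by rewrite -f_iso !gK act_iso f_iso.
Qed.

Definition prod_action alpha1 alpha2 n1 n2
    (act1 : 'rV['Z_p]_alpha1 -> 'rV[R]_n1 -> 'rV[R]_n1)
    (act2 : 'rV['Z_p]_alpha2 -> 'rV[R]_n2 -> 'rV[R]_n2)
    (a : 'rV['Z_p]_(alpha1 + alpha2)) (z : 'rV[R]_(n1 + n2)) : 'rV[R]_(n1 + n2) :=
  row_mx (act1 (lsubmx a) (lsubmx z)) (act2 (rsubmx a) (rsubmx z)).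

Lemma isometric_action_prod alpha1 alpha2 n1 n2
    (act1 : 'rV['Z_p]_alpha1 -> 'rV[R]_n1 -> 'rV[R]_n1)
    (act2 : 'rV['Z_p]_alpha2 -> 'rV[R]_n2 -> 'rV[R]_n2) :
  isometric_action act1 -> isometric_action act2 ->
  isometric_action (prod_action act1 act2).
Proof.
move=> [act10 act1D act1_iso] [act20 act2D act2_iso].
split=> [z | a b z | a]; rewrite /prod_action.
- by rewrite !linear0 act10 act20 hsubmxK.
- by rewrite !linearD act1D act2D row_mxKl row_mxKr.
- apply/isometryP => u v; rewrite sqdist_row_mx.
  move: (act1_iso (lsubmx a)) (act2_iso (rsubmx a)) => /isometryP-> /isometryP->.
  by rewrite -sqdist_row_mx !hsubmxK.
Qed.

End IsometricActions.

Section StandardInclusion.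
Variables (R : realType) (k n : nat) (x : 'rV[R]_k).

Lemma std_incl_val (i : 'I_n) (j : 'I_k) : i = j :> nat -> std_incl n x 0 i = x 0 j.
Proof.
move=> eq_ij; rewrite /std_incl mxE; case: ltnP => [lt_ik | ].
  by congr (x 0 _); apply/val_inj.
by rewrite eq_ij leqNgt ltn_ord.
Qed.

Lemma std_incl_ge (i : 'I_n) : (k <= i)%N -> std_incl n x 0 i = 0.
Proof. by rewrite /std_incl mxE; case: ltnP => // lt_ik; rewrite leqNgt lt_ik. Qed.

End StandardInclusion.

Section BlockShuffle.
Variables (n1 n2 k1 k2 : nat) (le_k1n1 : (k1 <= n1)%N) (le_k2n2 : (k2 <= n2)%N).

(* Index [i] of the block layout R^n1 x R^n2 is sent to its index in the
   layout (x, y, padding of x, padding of y) of the standard inclusion. *)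
Definition block_shuffle_nat (i : nat) : nat :=
  if (i < n1)%N then (if (i < k1)%N then i else k1 + k2 + (i - k1))%N
  else (if (i - n1 < k2)%N then k1 + (i - n1) else i)%N.

Lemma block_shuffle_nat_lt (i : 'I_(n1 + n2)) : (block_shuffle_nat i < n1 + n2)%N.
Proof. by have := ltn_ord i; rewrite /block_shuffle_nat; do 2 case: ifP => ?; lia. Qed.

Definition block_shuffle_fun (i : 'I_(n1 + n2)) : 'I_(n1 + n2) :=
  Ordinal (block_shuffle_nat_lt i).

Lemma block_shuffle_fun_inj : injective block_shuffle_fun.
Proof.
move=> i j /(congr1 val); rewrite /= /block_shuffle_nat => eq_ij; apply/val_inj.
by move: eq_ij; do 4 case: ifP => ? /=; lia.
Qed.

Definition block_shuffle : 'S_(n1 + n2) := perm block_shuffle_fun_inj.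

Lemma block_shuffle_lshift (j : 'I_n1) :
  block_shuffle (lshift n2 j) =
  (if (j < k1)%N then j : nat else k1 + k2 + (j - k1))%N :> nat.
Proof. by rewrite permE /= /block_shuffle_nat ltn_ord. Qed.

Lemma block_shuffle_rshift (j : 'I_n2) :
  block_shuffle (rshift n1 j) = (if (j < k2)%N then k1 + j else n1 + j)%N :> nat.
Proof. by rewrite permE /= /block_shuffle_nat ltnNge leq_addr addKn. Qed.

Lemma col_perm_block_shuffle (R : realType) (x : 'rV[R]_k1) (y : 'rV[R]_k2) :
  col_perm block_shuffle (std_incl (n1 + n2) (row_mx x y)) =
  row_mx (std_incl n1 x) (std_incl n2 y).
Proof.
apply/rowP => i; rewrite mxE; case: (split_ordP i) => j ->.
- rewrite row_mxEl; have := block_shuffle_lshift j.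
  case: (ltnP j k1) => [lt_jk1 | le_k1j] shuffle_j.
  + rewrite (std_incl_val _ (j := lshift k2 (Ordinal lt_jk1))) ?row_mxEl //.
    by rewrite (std_incl_val _ (j := Ordinal lt_jk1)).
  + by rewrite !std_incl_ge // shuffle_j; lia.
- rewrite row_mxEr; have := block_shuffle_rshift j.
  case: (ltnP j k2) => [lt_jk2 | le_k2j] shuffle_j.
  + rewrite (std_incl_val _ (j := rshift k1 (Ordinal lt_jk2))) ?row_mxEr //.
    by rewrite (std_incl_val _ (j := Ordinal lt_jk2)).
  + by rewrite !std_incl_ge // shuffle_j; lia.
Qed.

End BlockShuffle.

Theorem lemma2 (R : realType) (p k1 k2 : nat) (hp : prime p)
  (X : 'rV[R]_k1 -> Prop) (Y : 'rV[R]_k2 -> Prop) :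
  euclidean_sub_ptoral p X -> euclidean_sub_ptoral p Y ->
  euclidean_sub_ptoral p (setXrow X Y).
Proof.
move=> [n1 [a1 [act1 [le_k1n1 a1_gt0 act1P [x1 orbX]]]]].
move=> [n2 [a2 [act2 [le_k2n2 a2_gt0 act2P [x2 orbY]]]]].
pose s := block_shuffle le_k1n1 le_k2n2.
exists (n1 + n2)%N, (a1 + a2)%N,
  (fun a z => col_perm s^-1 (prod_action act1 act2 a (col_perm s z))).
split; [lia | lia | |].
  exact: isometric_action_conj (@col_permK _ _ _ s) (@col_permKV _ _ _ s)
    (isometry_col_perm s) (isometric_action_prod act1P act2P).
exists (col_perm s^-1 (row_mx x1 x2)) => _ [x [y [Xx Yy ->]]].
have [g1 gx1] := orbX x Xx; have [g2 gx2] := orbY y Yy.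
exists (row_mx g1 g2).
by rewrite col_permKV /prod_action !row_mxKl !row_mxKr -gx1 -gx2
  -col_perm_block_shuffle col_permK.
Qed.
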